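(* Let $p$ be a pattern graph, $d$ a data graph and $V_c(p)$ a vertex cover of $p$, and assume $M(p,d)\neq\emptyset$. Let $R=S_{plain}/S_{comp}$ be the compression ratio, where $S_{plain}=|V(p)|\cdot|M(p,d)|$ and $S_{comp}=\sum_{s}\mathrm{size}(f|s)$, the sum ranging over all skeletons $s:V_c(p)\to V(d)$ with $M|s\neq\emptyset$. Then $$R\ \ge\ \frac{|V(p)|\cdot |M(p,d)|}{|V(p)|\cdot |M(p,d)| + |V_c(p)|\cdot \big(|M(p[V_c(p)],d)| - |M(p,d)|\big)}.$$
   Context: Graphs are finite, simple and undirected. $p$ (the pattern) and $d$ (the data graph) are graphs, the vertices of $d$ carry a fixed total order, and $\mathbf{ord}$ is a set of ordered pairs of vertices of $p$ (a symmetry-breaking partial order). For a subgraph $p'$ of $p$, a match of $p'$ in $d$ is an injective map $f:V(p')\to V(d)$ such that $(f(x),f(y))\in E(d)$ for every edge $(x,y)\in E(p')$ and $f(x)<f(y)$ for every $(x,y)\in\mathbf{ord}$ with $x,y\in V(p')$; $M(p',d)$ denotes the set of matches of $p'$ in $d$. A vertex cover of $p$ is a set $V_c(p)\subseteq V(p)$ containing at least one endpoint of every edge of $p$, and $p[V_c(p)]$ is the subgraph of $p$ induced on $V_c(p)$. For a skeleton $s:V_c(p)\to V(d)$, $M|s=\{f\in M(p,d): f|_{V_c(p)}=s\}$. Storage model: each vertex occupies one integer. The compressed form $f|s$ of $M|s$ stores $s$ ($|V_c(p)|$ integers) and, for each $v\in V(p)\setminus V_c(p)$, the set $f|s(v)=\{f(v):f\in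 M|s\}$ ($|f|s(v)|$ integers), so $\mathrm{size}(f|s)=|V_c(p)|+\sum_{v\in V(p)\setminus V_c(p)}|f|s(v)|$. *)

From mathcomp Require Import all_boot all_order all_algebra.
Set Implicit Arguments. Unset Strict Implicit. Unset Printing Implicit Defensive.
Import Order.TTheory GRing.Theory Num.Theory.

Definition simple_graph (T : finType) (e : rel T) : Prop :=
  (forall x y, e x y = e y x) /\ (forall x, ~~ e x x).

(* Pattern p = (P, ep); data graph d = ('I_n, ed), whose vertices carry the
   fixed total order of 'I_n (natural order); ord : rel P is the
   symmetry-breaking set of ordered pairs. *)

Definition vertex_cover (P : finType) (ep : rel P) (Vc : {set P}) : Prop :=
  forall x y, ep x y -> (x \in Vc) || (y \in Vc).

Definition is_match (P : finType) (ep : rel P) (ord : rel P) (n : nat)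
    (ed : rel 'I_n) (f : {ffun P -> 'I_n}) : bool :=
  [&& injectiveb f,
      [forall x, forall y, ep x y ==> ed (f x) (f y)] &
      [forall x, forall y, ord x y ==> (f x < f y)%N]].

Definition matches (P : finType) (ep ord : rel P) (n : nat) (ed : rel 'I_n)
  : {set {ffun P -> 'I_n}} := [set f | is_match ep ord ed f].

Definition sub_vert (P : finType) (S : {set P}) := {x : P | x \in S}.

(* Matches of the induced subgraph p[S]: edges and ord-pairs among S. *)
Definition is_match_sub (P : finType) (ep ord : rel P) (S : {set P}) (n : nat)
    (ed : rel 'I_n) (f : {ffun sub_vert S -> 'I_n}) : bool :=
  [&& injectiveb f,
      [forall x, forall y, ep (val x) (val y) ==> ed (f x) (f y)] &
      [forall x, forall y, ord (val x) (val y) ==> (f x < f y)%N]].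

Definition matches_sub (P : finType) (ep ord : rel P) (S : {set P}) (n : nat)
    (ed : rel 'I_n) : {set {ffun sub_vert S -> 'I_n}} :=
  [set f | is_match_sub ep ord ed f].

Definition restrict (P : finType) (S : {set P}) (n : nat) (f : {ffun P -> 'I_n})
  : {ffun sub_vert S -> 'I_n} := [ffun x => f (val x)].

Definition matches_given (P : finType) (ep ord : rel P) (Vc : {set P}) (n : nat)
    (ed : rel 'I_n) (s : {ffun sub_vert Vc -> 'I_n}) : {set {ffun P -> 'I_n}} :=
  [set f in matches ep ord ed | restrict Vc f == s].

Definition comp_size (P : finType) (ep ord : rel P) (Vc : {set P}) (n : nat)
    (ed : rel 'I_n) (s : {ffun sub_vert Vc -> 'I_n}) : nat :=
  #|Vc| + \sum_(v in ~: Vc) #|[set (f : {ffun P -> 'I_n}) v | f in matches_given ep ord ed s]|.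

Definition S_plain (P : finType) (ep ord : rel P) (n : nat) (ed : rel 'I_n) : nat :=
  #|P| * #|matches ep ord ed|.

Definition S_comp (P : finType) (ep ord : rel P) (Vc : {set P}) (n : nat)
    (ed : rel 'I_n) : nat :=
  \sum_(s : {ffun sub_vert Vc -> 'I_n} | matches_given ep ord ed s != set0)
     comp_size ep ord ed s.

Definition compression_ratio (P : finType) (ep ord : rel P) (Vc : {set P})
    (n : nat) (ed : rel 'I_n) : rat :=
  ((S_plain ep ord ed)%:R / (S_comp ep ord Vc ed)%:R)%R.

From mathcomp Require Import all_boot all_order all_algebra.
From mathcomp Require Import ring.
Import Order.TTheory GRing.Theory Num.Theory.

(* Grouping the matches by their skeleton, each nonempty class M|s costs
   |Vc| integers for s plus at most |M|s| integers for every vertex outside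
   Vc.  Summing over the classes, which partition M(p,d), gives
   S_comp <= |Vc| * #skeletons + (|V(p)| - |Vc|) * |M(p,d)|, and there are at
   most |M(p[Vc],d)| skeletons because the restriction of a match to Vc is a
   match of p[Vc].  The right-hand side is the denominator of the claimed
   bound. *)

Section Skeletons.
Variables (P : finType) (ep ord : rel P) (n : nat) (ed : rel 'I_n).

Lemma restrict_matches (S : {set P}) f :
  f \in matches ep ord ed -> restrict S f \in matches_sub ep ord S ed.
Proof.
rewrite !inE => /and3P[/injectiveP f_inj /forallP f_ep /forallP f_ord].
apply/and3P; split.
- by apply/injectiveP => x y; rewrite !ffunE => /f_inj /val_inj.
- apply/forallP => x; apply/forallP => y; rewrite !ffunE.
  exact: (forallP (f_ep (val x)) (val y)).
- apply/forallP => x; apply/forallP => y; rewrite !ffunE.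
  exact: (forallP (f_ord (val x)) (val y)).
Qed.

Variable Vc : {set P}.
Local Notation skeleton := {ffun sub_vert Vc -> 'I_n}.

Lemma sum_card_matches_given :
  \sum_(s : skeleton | matches_given ep ord ed s != set0)
     #|matches_given ep ord ed s|
  = #|matches ep ord ed|.
Proof.
rewrite -[RHS]sum1_card (partition_big (@restrict P Vc n) predT) //.
rewrite [LHS]big_mkcond /=.
apply: eq_bigr => s _; rewrite sum1_card.
rewrite [RHS](@eq_card _ _ (matches_given ep ord ed s)); last first.
  by move=> f; rewrite inE.
by case: ifP => // /negbFE /eqP ->; rewrite cards0.
Qed.

Lemma card_skeletons_le :
  #|[pred s : skeleton | matches_given ep ord ed s != set0]|
  <= #|matches_sub ep ord Vc ed|.
Proof.
apply: subset_leq_card; apply/subsetP => s /set0Pn[f].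
by rewrite inE => /andP[f_match /eqP <-]; apply: restrict_matches.
Qed.

Lemma comp_size_le (s : skeleton) :
  comp_size ep ord ed s <= #|Vc| + #|~: Vc| * #|matches_given ep ord ed s|.
Proof.
rewrite leq_add2l -sum_nat_const.
by apply: leq_sum => v _; apply: leq_imset_card.
Qed.

Lemma S_comp_le :
  S_comp ep ord Vc ed
  <= #|Vc| * #|matches_sub ep ord Vc ed| + #|~: Vc| * #|matches ep ord ed|.
Proof.
apply: (@leq_trans (\sum_(s : skeleton | matches_given ep ord ed s != set0)
                     (#|Vc| + #|~: Vc| * #|matches_given ep ord ed s|))).
  by apply: leq_sum => s _; apply: comp_size_le.
rewrite big_split /= -big_distrr /= sum_card_matches_given leq_add2r.
by rewrite sum_nat_const mulnC leq_mul2l card_skeletons_le orbT.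
Qed.

Lemma S_comp_gt0 :
  0 < #|P| -> matches ep ord ed != set0 -> 0 < S_comp ep ord Vc ed.
Proof.
move=> /card_gt0P[v _] /set0Pn[f f_match].
have f_given : f \in matches_given ep ord ed (restrict Vc f).
  by rewrite inE f_match eqxx.
rewrite /S_comp (bigD1 (restrict Vc f)) /=; last by apply/set0Pn; exists f.
rewrite ltn_addr // /comp_size; have [v_Vc | v_nVc] := boolP (v \in Vc).
  by rewrite ltn_addr // card_gt0; apply/set0Pn; exists v.
rewrite (bigD1 v) ?inE //= addnCA ltn_addr // card_gt0.
by apply/set0Pn; exists (f v); apply/imsetP; exists f.
Qed.

End Skeletons.

Local Open Scope ring_scope.

Lemma ler_wpdiv2l (R : numFieldType) (a x y : R) :
  0 <= a -> 0 < x -> x <= y -> a / y <= a / x.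
Proof.
move=> a_ge0 x_gt0 le_xy; have y_gt0 := lt_le_trans x_gt0 le_xy.
by rewrite ler_wpM2l // lef_pV2 ?posrE.
Qed.

Theorem mainTheorem2 (P : finType) (ep ord : rel P) (n : nat) (ed : rel 'I_n)
    (Vc : {set P}) :
  simple_graph ep -> simple_graph ed -> vertex_cover ep Vc ->
  matches ep ord ed != set0 ->
  ((#|P| * #|matches ep ord ed|)%:R /
     ((#|P| * #|matches ep ord ed|)%:R
      + (#|Vc|)%:R * ((#|matches_sub ep ord Vc ed|)%:R
                      - (#|matches ep ord ed|)%:R)) : rat)
  <= compression_ratio ep ord Vc ed.
Proof.
move=> _ _ _ matches_n0; rewrite /compression_ratio /S_plain.
(* For an empty pattern S_comp is 0 too; both sides are 0 since x / 0 = 0. *)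
have [-> | P_gt0] := posnP #|P|; first by rewrite !mul0n !mul0r.
have -> : (#|P| * #|matches ep ord ed|)%:R
          + #|Vc|%:R * (#|matches_sub ep ord Vc ed|%:R
                        - #|matches ep ord ed|%:R)
          = (#|Vc| * #|matches_sub ep ord Vc ed|
             + #|~: Vc| * #|matches ep ord ed|)%N%:R :> rat.
  by rewrite -(cardsC Vc) !natrD !natrM; ring.
apply: ler_wpdiv2l; rewrite ?ler0n ?ltr0n ?ler_nat //.
- exact: S_comp_gt0 P_gt0 matches_n0.
- exact: S_comp_le.
Qed.
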